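(* In Setting S, there is a polynomial $P\in\mathbb C[p,q]$ such that \[ h_{\Gamma E}(p,q)=\dim_{\mathbb C}H^0(X,\widetilde E(p,q))=P(p,q) \] for all integers $p\ge i^0_\ell+\dots+i^s_\ell-a_1j^1_1-\dots-a_rj^r_1-1$ and $q\ge j^0_\ell+\dots+j^r_\ell-1$.
   Context: Setting S. Fix integers $s,r\ge1$ and $0\le a_1\le\dots\le a_r$. $X=\mathbb P(\mathcal O_{\mathbb P^s}\oplus\mathcal O_{\mathbb P^s}(a_1)\oplus\dots\oplus\mathcal O_{\mathbb P^s}(a_r))$ is the smooth complete toric variety of dimension $s+r$ with $N=\mathbb Z^{s+r}$ (basis $e_1,\dots,e_s,f_1,\dots,f_r$), character lattice $M=\mathbb Z^{s+r}$, and rays $\rho_0=\mathrm{cone}(-e_1-\dots-e_s+a_1f_1+\dots+a_rf_r)$, $\rho_i=\mathrm{cone}(e_i)$ $(1\le i\le s)$, $\eta_0=\mathrm{cone}(-f_1-\dots-f_r)$, $\eta_j=\mathrm{cone}(f_j)$ $(1\le j\le r)$; the maximal cones are spanned by all rays but one $\rho_i$ and one $\eta_j$. For $m=(d_1,\dots,d_{s+r})\in M$: $\langle m,n(\rho_0)\rangle=-d_1-\dots-d_s+a_1d_{s+1}+\dots+a_rd_{s+r}$, $\langle m,n(\rho_i)\rangle=d_i$, $\langle m,n(\eta_0)\rangle=-(d_{s+1}+\dots+d_{s+r})$, $\langle m,n(\eta_j)\rangle=d_{s+j}$. The Cox ring is $R=\mathbb C[x_0,\dots,x_s,y_0,\dots,y_r]$,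 $\mathbb Z^{s+r+2}$-graded (finest grading) and $\mathrm{Cl}(X)\cong\mathbb Z^2$-graded by $\deg x_i=(1,0)$, $\deg y_0=(0,1)$, $\deg y_j=(-a_j,1)$; $(p,q)$ corresponds to $p[D_{\rho_0}]+q[D_{\eta_0}]$. $E$ is a finitely generated $\mathbb Z^{s+r+2}$-graded reflexive $R$-module of rank $\ell$, $\widetilde E$ its (equivariant) sheaf on $X$, $\widetilde E(p,q)$ the sheaf of the shift $E(p,q)$ ($E(p,q)_\alpha=E_{\alpha+(p,q)}$), $\Gamma E=\bigoplus_{(p,q)}H^0(X,\widetilde E(p,q))$, $\mathrm{supp}(\Gamma E)=\{(p,q):H^0(X,\widetilde E(p,q))\neq0\}$, $h_{\Gamma E}(p,q)=\dim H^0(X,\widetilde E(p,q))$. Klyachko filtrations: for a ray $\tau$ let $x^{\hat\tau}$ be the product of the variables of all rays other than $\tau$; the pieces of $E_{x^{\hat\tau}}$ of degree $\phi(m)=(\langle m,n(\tau')\rangle)_{\tau'}$ embed compatibly into a fixed $\mathbf E\cong\mathbb C^\ell$, and the image depends only on $i=\langle m,n(\tau)\rangle$; it is denoted $E^\tau(i)$, an increasing filtration of $\mathbb C^\ell$. For $\tau=\rho_t$ ($0\le t\le s$) write integers $i^t_1\le\dots\le i^t_\ell$ and subspaces $0\ne F^t_1\subseteq\dots\subseteq F^t_\ell=\mathbb C^\ell$ with $E^{\rho_t}(i)=0$ for $i<i^t_1$, $=F^t_n$ for $i^t_n\le i<i^t_{n+1}$, $=\mathbb C^\ell$ for $i\ge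 i^t_\ell$, and $i^t_n=i^t_{n+1}$ iff $F^t_n=F^t_{n+1}$; similarly for $\tau=\eta_u$ ($0\le u\le r$) with integers $j^u_n$ and subspaces $G^u_n$. Set $i^t_{\ell+1}=j^u_{\ell+1}=+\infty$. Known fact (Klyachko): $H^0(X,\widetilde E(p,q))=\bigoplus_{m\in M}H^0(X,\widetilde E(p,q))_m$ (torus weights) with $H^0(X,\widetilde E(p,q))_m\cong E^{\rho_0}(\langle m,n(\rho_0)\rangle+p)\cap\bigcap_{i=1}^sE^{\rho_i}(\langle m,n(\rho_i)\rangle)\cap E^{\eta_0}(\langle m,n(\eta_0)\rangle+q)\cap\bigcap_{j=1}^rE^{\eta_j}(\langle m,n(\eta_j)\rangle)$. *)

From mathcomp Require Import all_boot all_order all_algebra all_field.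
From mathcomp Require Import boolp classical_sets fsbigop.
Set Implicit Arguments. Unset Strict Implicit. Unset Printing Implicit Defensive.
Import Order.TTheory GRing.Theory Num.Theory.
Local Open Scope ring_scope.

(* The complex numbers are modelled by algC (algebraically closed, char 0). *)
Notation CC := algC.

(* Subspaces of C^l are row spaces of l x l matrices (mxalgebra, %MS).     *)
(* A Klyachko filtration of one ray is given, as in the paper, by integers *)
(* i_1 <= ... <= i_l (the function ii, indices 1..l) and subspaces          *)
(* 0 <> F_1 <= ... <= F_l = C^l (the function FF, indices 1..l), with        *)
(* i_n = i_(n+1) iff F_n = F_(n+1).                                          *)
Definition filt_data (l : nat) (ii : nat -> int) (FF : nat -> 'M[CC]_l) : Prop :=
  [/\ (forall n, (1 <= n < l)%N -> ii n <= ii n.+1),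
      (forall n, (1 <= n < l)%N -> (FF n <= FF n.+1)%MS),
      FF 1%N != 0,
      (FF l == 1%:M)%MS &
      (forall n, (1 <= n < l)%N -> (ii n == ii n.+1) = (FF n == FF n.+1)%MS)].

(* E^tau(i): 0 for i < i_1, F_n for i_n <= i < i_(n+1), C^l for i >= i_l.   *)
(* Since the F_n are nested, this is the sum of the F_n with i_n <= i.       *)
Definition filt (l : nat) (ii : nat -> int) (FF : nat -> 'M[CC]_l) (i : int)
  : 'M[CC]_l :=
  (\sum_(1 <= n < l.+1 | (ii n <= i)%R) FF n)%MS.

(* Characters m = (d_1..d_s, d_(s+1)..d_(s+r)) in M = Z^(s+r). *)
Definition charM (s r : nat) := ({ffun 'I_s -> int} * {ffun 'I_r -> int})%type.

Definition pair_rho0 (s r : nat) (a : 'I_r -> nat) (m : charM s r) : int :=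
  - (\sum_(i < s) m.1 i) + \sum_(j < r) (a j)%:Z * m.2 j.
Definition pair_eta0 (s r : nat) (m : charM s r) : int :=
  - (\sum_(j < r) m.2 j).

(* Data of the filtrations: rays rho_t (t : 'I_s.+1, t = 0 is rho_0,       *)
(* t = lift ord0 i is rho_(i+1)) and eta_u (u : 'I_r.+1 similarly).          *)
(* Klyachko: weight-m part of H^0(X, E~(p,q)).                               *)
Definition H0_weight (s r l : nat) (a : 'I_r -> nat)
  (iR : 'I_s.+1 -> nat -> int) (FR : 'I_s.+1 -> nat -> 'M[CC]_l)
  (jE : 'I_r.+1 -> nat -> int) (GE : 'I_r.+1 -> nat -> 'M[CC]_l)
  (p q : int) (m : charM s r) : 'M[CC]_l :=
  (filt (iR ord0) (FR ord0) (pair_rho0 a m + p)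
   :&: (\bigcap_(i < s) filt (iR (lift ord0 i)) (FR (lift ord0 i)) (m.1 i))
   :&: filt (jE ord0) (GE ord0) (pair_eta0 m + q)
   :&: (\bigcap_(j < r) filt (jE (lift ord0 j)) (GE (lift ord0 j)) (m.2 j)))%MS.

(* h_{Gamma E}(p,q) = dim H^0(X, E~(p,q)) = sum over all m in M of the     *)
(* dimensions of the weight spaces (finitely supported sum).                  *)
Definition hGamma (s r l : nat) (a : 'I_r -> nat)
  (iR : 'I_s.+1 -> nat -> int) (FR : 'I_s.+1 -> nat -> 'M[CC]_l)
  (jE : 'I_r.+1 -> nat -> int) (GE : 'I_r.+1 -> nat -> 'M[CC]_l)
  (p q : int) : nat :=
  (\big[addn/0%N]_(m \in [set: charM s r])
     \rank (H0_weight a iR FR jE GE p q m))%N.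

(* Evaluation of a bivariate polynomial P in C[p,q], represented as        *)
(* P : {poly {poly C}} (outer variable q, inner variable p).                *)
Definition eval2 (P : {poly {poly CC}}) (x y : CC) : CC := (P.[y%:P]).[x].

(* By Klyachko's formula the weight-m part of H^0(X, E(p,q)) is an intersection of
   filtration pieces, and which piece occurs for the ray tau only depends on the level
   of m at tau: the number of jumps i^tau_n lying below the (shifted) pairing
   <m, n(tau)>.  Hence h(p,q) = sum_lam rank(E_lam) * N_lam(p,q), where N_lam counts
   the characters m with level vector lam.  By inclusion-exclusion N_lam is an
   alternating sum of counts of the m whose pairings lie above given thresholds;
   shifting m by the thresholds, these are the points (x, y) of N^s x N^r with
   |y| <= B and |x| <= A + a.y, where A and B are affine in p and q.  Summing
   coordinate by coordinate with Faulhaber's formula shows that this count is a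
   polynomial in (A, B) on the quadrant A, B >= -1, and the lower bounds on p and q
   are exactly what puts (A, B) in that quadrant for every choice of thresholds. *)

From mathcomp Require Import all_boot all_order all_algebra all_field.
From mathcomp Require Import boolp classical_sets fsbigop.
From mathcomp Require Import ring zify.
Import Order.TTheory GRing.Theory Num.Theory.
Set Implicit Arguments. Unset Strict Implicit. Unset Printing Implicit Defensive.
Local Open Scope ring_scope.

Lemma pow_antidifference (R : numFieldType) (e : nat) :
  exists T : {poly R}, forall x, T.[x + 1] - T.[x] = x ^+ e.
Proof.
elim/ltn_ind: e => e IH.
have /fin_all_exists[T HT] : forall i : 'I_e, exists T : {poly R},
    forall x, T.[x + 1] - T.[x] = x ^+ i by move=> i; apply: IH.
(* The witness comes from (x + 1)^(e+1) - x^(e+1) = sum_(i <= e) 'C(e+1, i) x^i. *)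
exists ((e.+1)%:R^-1 *: ('X^(e.+1) - \sum_(i < e) 'C(e.+1, i)%:R *: T i)) => x.
rewrite !hornerZ !(hornerD, hornerN, hornerXn, horner_sum) -mulrBr.
have -> : \sum_(i < e) ('C(e.+1, i)%:R *: T i).[x + 1]
        = \sum_(i < e) ('C(e.+1, i)%:R *: T i).[x] + \sum_(i < e) x ^+ i *+ 'C(e.+1, i).
  rewrite -big_split; apply: eq_bigr => i _ /=.
  by rewrite !hornerZ -(HT i) mulrnBl mulr_natl mulr_natl addrC subrK.
rewrite exprD1n 2!big_ord_recr /= binn binSn mulr1n.
set U := \sum_(i < e) _; set V := \sum_(i < e) _.
have -> : U + x ^+ e *+ e.+1 + x ^+ e.+1 - (V + U) - (x ^+ e.+1 - V) = x ^+ e *+ e.+1.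
  by ring.
by rewrite -[x ^+ e *+ _]mulr_natl mulrA mulVf ?mul1r // pnatr_eq0.
Qed.

Lemma sum_pow_poly (R : numFieldType) (e : nat) :
  exists S : {poly R}, forall n : nat, S.[n%:R] = \sum_(t < n) t%:R ^+ e.
Proof.
have [T HT] := pow_antidifference R e.
exists (T - (T.[0])%:P) => n; rewrite hornerD hornerN hornerC.
rewrite -(telescope_sumr (fun k => T.[k%:R]) (leq0n n)) big_mkord.
by apply: eq_bigr => t _; rewrite mulrSr HT.
Qed.

Lemma eval2D P Q x y : eval2 (P + Q) x y = eval2 P x y + eval2 Q x y.
Proof. by rewrite /eval2 !hornerD. Qed.

Lemma eval2M P Q x y : eval2 (P * Q) x y = eval2 P x y * eval2 Q x y.
Proof. by rewrite /eval2 !hornerM. Qed.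

Lemma eval2C c x y : eval2 c%:P%:P x y = c.
Proof. by rewrite /eval2 !hornerC. Qed.

Lemma eval2_x x y : eval2 'X%:P x y = x.
Proof. by rewrite /eval2 hornerC hornerX. Qed.

Lemma eval2_y x y : eval2 'X x y = y.
Proof. by rewrite /eval2 hornerX hornerC. Qed.

Lemma eval2E P x y :
  eval2 P x y = \sum_(i < size P) \sum_(j < size P`_i) P`_i`_j * x ^+ j * y ^+ i.
Proof.
rewrite /eval2 (horner_coef P) horner_sum; apply: eq_bigr => i _.
rewrite -rmorphXn /= hornerM_comm; last exact: mulrC.
by rewrite hornerC (horner_coef P`_i) mulr_suml.
Qed.

Definition quadrant (x0 y0 x y : int) : Prop := x0 <= x /\ y0 <= y.

Definition poly2_on (D : int -> int -> Prop) (F : int -> int -> CC) : Prop :=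
  exists P : {poly {poly CC}}, forall x y, D x y -> F x y = eval2 P x%:~R y%:~R.

Section Poly2On.
Variable D : int -> int -> Prop.

Lemma poly2_on_eq F G :
  (forall x y, D x y -> F x y = G x y) -> poly2_on D G -> poly2_on D F.
Proof. by move=> FG [P HP]; exists P => x y Dxy; rewrite FG // HP. Qed.

Lemma poly2_on_cst c : poly2_on D (fun _ _ => c).
Proof. by exists c%:P%:P => x y _; rewrite eval2C. Qed.

Lemma poly2_on_x : poly2_on D (fun x _ => x%:~R).
Proof. by exists 'X%:P => x y _; rewrite eval2_x. Qed.

Lemma poly2_on_y : poly2_on D (fun _ y => y%:~R).
Proof. by exists 'X => x y _; rewrite eval2_y. Qed.

Lemma poly2_onD F G :
  poly2_on D F -> poly2_on D G -> poly2_on D (fun x y => F x y + G x y).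
Proof. by move=> [P HP] [Q HQ]; exists (P + Q) => x y Dxy; rewrite eval2D HP ?HQ. Qed.

Lemma poly2_onM F G :
  poly2_on D F -> poly2_on D G -> poly2_on D (fun x y => F x y * G x y).
Proof. by move=> [P HP] [Q HQ]; exists (P * Q) => x y Dxy; rewrite eval2M HP ?HQ. Qed.

Lemma poly2_onX F n : poly2_on D F -> poly2_on D (fun x y => F x y ^+ n).
Proof.
move=> HF; elim: n => [|n IH]; first exact: poly2_on_cst.
by apply: poly2_on_eq (poly2_onM HF IH) => x y _; rewrite exprS.
Qed.

Lemma poly2_on_sum (I : Type) (r : seq I) (F : I -> int -> int -> CC) :
  (forall i, poly2_on D (F i)) -> poly2_on D (fun x y => \sum_(i <- r) F i x y).
Proof.
move=> HF; elim: r => [|i r IH].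
  by apply: poly2_on_eq (poly2_on_cst 0) => x y _; rewrite big_nil.
by apply: poly2_on_eq (poly2_onD (HF i) IH) => x y _; rewrite big_cons.
Qed.

Lemma poly2_on_comp P u v : poly2_on D u -> poly2_on D v ->
  poly2_on D (fun x y => eval2 P (u x y) (v x y)).
Proof.
move=> Hu Hv; apply: poly2_on_eq (poly2_on_sum (index_enum _) _) => [x y _|i].
  by rewrite eval2E.
apply: poly2_on_sum => j; apply: poly2_onM; last exact: poly2_onX.
by apply: poly2_onM; [exact: poly2_on_cst | exact: poly2_onX].
Qed.

Lemma poly2_on_horner (S : {poly CC}) u :
  poly2_on D u -> poly2_on D (fun x y => S.[u x y]).
Proof.
move=> Hu; apply: poly2_on_eq (poly2_on_comp S%:P Hu (poly2_on_cst 0)) => x y _.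
by rewrite /eval2 hornerC.
Qed.

End Poly2On.

Lemma poly2_on_sub (D D' : int -> int -> Prop) F :
  (forall x y, D' x y -> D x y) -> poly2_on D F -> poly2_on D' F.
Proof. by move=> DD' [P HP]; exists P => x y /DD'; apply: HP. Qed.

Lemma poly2_on_shift D F (c d : int) : poly2_on D F ->
  poly2_on (fun x y => D (x + c) (y + d)) (fun x y => F (x + c) (y + d)).
Proof.
move=> [P HP]; apply: poly2_on_eq (poly2_on_comp P (u := fun x _ => (x + c)%:~R)
  (v := fun _ y => (y + d)%:~R) _ _) => [x y /HP //||].
- by apply: poly2_on_eq (poly2_onD (poly2_on_x _) (poly2_on_cst _ c%:~R)) => x y _;
    rewrite intrD.
- by apply: poly2_on_eq (poly2_onD (poly2_on_y _) (poly2_on_cst _ d%:~R)) => x y _;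
    rewrite intrD.
Qed.

Definition poly3 (H : nat -> int -> int -> CC) : Prop :=
  exists cs : seq ({poly {poly CC}} * nat), forall t x y,
    H t x y = \sum_(c <- cs) eval2 c.1 x%:~R y%:~R * t%:R ^+ c.2.

Lemma poly3_eq H K : (forall t x y, H t x y = K t x y) -> poly3 K -> poly3 H.
Proof. by move=> HK [cs Hcs]; exists cs => t x y; rewrite HK Hcs. Qed.

Lemma poly3_poly2 P : poly3 (fun _ x y => eval2 P x%:~R y%:~R).
Proof. by exists [:: (P, 0%N)] => t x y; rewrite big_seq1 expr0 mulr1. Qed.

Lemma poly3_cst c : poly3 (fun _ _ _ => c).
Proof. by apply: poly3_eq (poly3_poly2 c%:P%:P) => t x y; rewrite eval2C. Qed.

Lemma poly3_x : poly3 (fun _ x _ => x%:~R).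
Proof. by apply: poly3_eq (poly3_poly2 'X%:P) => t x y; rewrite eval2_x. Qed.

Lemma poly3_y : poly3 (fun _ _ y => y%:~R).
Proof. by apply: poly3_eq (poly3_poly2 'X) => t x y; rewrite eval2_y. Qed.

Lemma poly3_t : poly3 (fun t _ _ => t%:R).
Proof. by exists [:: (1, 1%N)] => t x y; rewrite big_seq1 eval2C mul1r. Qed.

Lemma poly3D H K : poly3 H -> poly3 K -> poly3 (fun t x y => H t x y + K t x y).
Proof. by move=> [cs Hcs] [ds Hds]; exists (cs ++ ds) => t x y; rewrite big_cat Hcs Hds. Qed.

Lemma poly3M H K : poly3 H -> poly3 K -> poly3 (fun t x y => H t x y * K t x y).
Proof.
move=> [cs Hcs] [ds Hds].
exists [seq (c.1 * d.1, (c.2 + d.2)%N) | c <- cs, d <- ds] => t x y.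
rewrite Hcs Hds big_allpairs_dep mulr_suml; apply: eq_bigr => c _.
rewrite mulr_sumr; apply: eq_bigr => d _ /=.
by rewrite eval2M exprD mulrACA.
Qed.

Lemma poly3X H n : poly3 H -> poly3 (fun t x y => H t x y ^+ n).
Proof.
move=> HH; elim: n => [|n IH]; first exact: poly3_cst.
by apply: poly3_eq (poly3M HH IH) => t x y; rewrite exprS.
Qed.

Lemma poly3_sum (I : Type) (r : seq I) (H : I -> nat -> int -> int -> CC) :
  (forall i, poly3 (H i)) -> poly3 (fun t x y => \sum_(i <- r) H i t x y).
Proof.
move=> HH; elim: r => [|i r IH].
  by apply: poly3_eq (poly3_cst 0) => t x y; rewrite big_nil.
by apply: poly3_eq (poly3D (HH i) IH) => t x y; rewrite big_cons.
Qed.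

Lemma poly3_comp P u v : poly3 u -> poly3 v ->
  poly3 (fun t x y => eval2 P (u t x y) (v t x y)).
Proof.
move=> Hu Hv; apply: poly3_eq (poly3_sum (index_enum _) _) => [t x y|i].
  by rewrite eval2E.
apply: poly3_sum => j; apply: poly3M; last exact: poly3X.
by apply: poly3M; [exact: poly3_cst | exact: poly3X].
Qed.

Lemma truncnZ (z : int) : 0 <= z -> (Num.truncn z)%:Z = z.
Proof. by move=> z0; rewrite -[RHS](@truncnK int z) ?Znat_def // natz. Qed.

Lemma ltn_truncnS (z : int) (t : nat) : (t < Num.truncn (z + 1))%N = (t%:Z <= z).
Proof. by rewrite truncn_gt_nat natz -addn1 PoszD lerD2r. Qed.

Lemma poly2_on_sum_upto D H H3 : poly3 H3 ->
  (forall x y, D x y -> -1 <= y) ->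
  (forall t x y, D x y -> t%:Z <= y -> H t x y = H3 t x y) ->
  poly2_on D (fun x y => \sum_(t < Num.truncn (y + 1)) H t x y).
Proof.
move=> [cs Hcs] Dy HH3.
have Hc c : poly2_on D (fun x y =>
    eval2 c.1 x%:~R y%:~R * \sum_(t < Num.truncn (y + 1)) (t%:R : CC) ^+ c.2).
  have [S HS] := sum_pow_poly CC c.2.
  apply: poly2_onM; first by exists c.1.
  have Hy1 : poly2_on D (fun _ y => (y + 1)%:~R).
    by apply: poly2_on_eq (poly2_onD (poly2_on_y D) (poly2_on_cst D 1)) => x y _;
      rewrite intrD.
  apply: poly2_on_eq (poly2_on_horner S Hy1) => x y /Dy y1.
  by rewrite -HS -(truncnZ (z := y + 1)) //; lia.
apply: poly2_on_eq (poly2_on_sum cs Hc) => x y Dxy.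
rewrite (eq_bigr (fun t : 'I_ _ => H3 t x y)) => [|t _]; last first.
  by apply: HH3; rewrite -?ltn_truncnS.
under eq_bigr do rewrite Hcs.
by rewrite exchange_big /=; apply: eq_bigr => c _; rewrite mulr_sumr.
Qed.

(* At y = -1 the sum is empty, as is the Faulhaber sum evaluated at 0: hence y >= -1. *)
Lemma poly2_on_sum_diag (w : int) G : 0 <= w -> poly2_on (quadrant (-1) 0) G ->
  poly2_on (quadrant (-1) (-1))
    (fun x y => \sum_(t < Num.truncn (y + 1)) G (x + w * t%:Z) (y - t%:Z)).
Proof.
move=> w0 [P HP].
apply: (poly2_on_sum_upto (H := fun t x y => G (x + w * t%:Z) (y - t%:Z))
  (H3 := fun t x y => eval2 P (x%:~R + w%:~R * t%:R) (y%:~R + (-1) * t%:R))).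
- apply: poly3_comp; apply: poly3D.
  + exact: poly3_x.
  + exact: poly3M (poly3_cst _) poly3_t.
  + exact: poly3_y.
  + exact: poly3M (poly3_cst _) poly3_t.
- by move=> x y [].
move=> t x y [x1 _] ty; rewrite HP ?mulN1r ?intrB ?intrD ?intrM //.
by split; [have := mulr_ge0 w0 (ler0n _ t); lia | lia].
Qed.

Definition ffun_cons (T : Type) (n : nat) (x : T) (g : {ffun 'I_n -> T}) :
  {ffun 'I_n.+1 -> T} := [ffun i => if unlift ord0 i is Some j then g j else x].

Lemma ffun_cons0 (T : Type) n (x : T) (g : {ffun 'I_n -> T}) : ffun_cons x g ord0 = x.
Proof. by rewrite ffunE unlift_none. Qed.

Lemma ffun_consS (T : Type) n (x : T) (g : {ffun 'I_n -> T}) i :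
  ffun_cons x g (lift ord0 i) = g i.
Proof. by rewrite ffunE liftK. Qed.

Lemma big_ffun_cons (R : Type) (idx : R) (op : Monoid.com_law idx) (T : finType) n
    (F : {ffun 'I_n.+1 -> T} -> R) :
  \big[op/idx]_(h : {ffun 'I_n.+1 -> T}) F h =
  \big[op/idx]_(x : T) \big[op/idx]_(g : {ffun 'I_n -> T}) F (ffun_cons x g).
Proof.
rewrite pair_bigA (reindex (fun p : T * {ffun 'I_n -> T} => ffun_cons p.1 p.2)) //.
exists (fun h : {ffun 'I_n.+1 -> T} => (h ord0, [ffun i : 'I_n => h (lift ord0 i)])).
  move=> [x g] _ /=.
  by rewrite ffun_cons0; congr (_, _); apply/ffunP => i; rewrite ffunE ffun_consS.
move=> h _; apply/ffunP => i; rewrite ffunE.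
by case: unliftP => [j ->|->]; rewrite ?ffunE.
Qed.

Lemma big_ord_ffun_cons (R : Type) (idx : R) (op : Monoid.law idx) (T : Type) n
    (x : T) (g : {ffun 'I_n -> T}) (F : 'I_n.+1 -> T -> R) :
  \big[op/idx]_(i < n.+1) F i (ffun_cons x g i) =
  op (F ord0 x) (\big[op/idx]_(i < n) F (lift ord0 i) (g i)).
Proof.
by rewrite big_ord_recl ffun_cons0; congr (op _ _); apply: eq_bigr => i _; rewrite ffun_consS.
Qed.

(* The sum of Phi (A + w.y) (B - |y|) over the y in N^n with |y| <= B. *)
Fixpoint lattice_sum (R : nmodType) (n : nat) :
    ('I_n -> int) -> (int -> int -> R) -> int -> int -> R :=
  match n with
  | 0 => fun _ Phi A B => if 0 <= B then Phi A B else 0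
  | n.+1 => fun w Phi A B => \sum_(t < Num.truncn (B + 1))
      lattice_sum (fun i => w (lift ord0 i)) Phi (A + w ord0 * t%:Z) (B - t%:Z)
  end.

Section LatticeSum.
Variable R : nmodType.
Implicit Types (Phi : int -> int -> R) (A B : int).

Lemma lattice_sum_neg n (w : 'I_n -> int) Phi A B : B < 0 -> lattice_sum w Phi A B = 0.
Proof.
case: n w => [|n] w /= B0; first by rewrite leNgt B0.
by rewrite (_ : Num.truncn _ = 0%N) ?big_ord0 //; apply/truncn0Pn; lia.
Qed.

Lemma sum_ord_truncn N (G : nat -> R) B : B < N%:Z ->
  (forall t, B < t%:Z -> G t = 0) ->
  \sum_(t < N) G t = \sum_(t < Num.truncn (B + 1)) G t.
Proof.
move=> BN G0; have le_tN : (Num.truncn (B + 1) <= N)%N.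
  by rewrite -[N in (_ <= N)%N](natrK (R := int)) le_truncn // natz; lia.
rewrite (big_ord_widen N G le_tN) [LHS](bigID (fun t : 'I_N => t < Num.truncn (B + 1)))%N.
by rewrite /= [X in _ + X]big1 ?addr0 // => t; rewrite ltn_truncnS -ltNge => /G0.
Qed.

Lemma lattice_sum_box n N (w : 'I_n -> int) Phi A B : B < N%:Z ->
  \sum_(h : {ffun 'I_n -> 'I_N} | \sum_i (h i)%:Z <= B)
     Phi (A + \sum_i w i * (h i)%:Z) (B - \sum_i (h i)%:Z)
  = lattice_sum w Phi A B.
Proof.
elim: n w A B => [|n IH] w A B BN /=.
  rewrite big_mkcond /=; under eq_bigr do rewrite !big_ord0 addr0 subr0.
  by rewrite sumr_const card_ffun !card_ord expn0.
rewrite big_mkcond big_ffun_cons /=.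
rewrite -(sum_ord_truncn (G := fun t => lattice_sum (fun i => w (lift ord0 i)) Phi
  (A + w ord0 * t%:Z) (B - t%:Z)) BN) => [|t Bt]; last by apply: lattice_sum_neg; lia.
apply: eq_bigr => x _; rewrite -IH; last by lia.
rewrite [RHS]big_mkcond; apply: eq_bigr => g _.
rewrite (big_ord_ffun_cons _ _ _ (fun _ (t : 'I_N) => (t : nat)%:Z)).
rewrite (big_ord_ffun_cons _ _ _ (fun i (t : 'I_N) => w i * (t : nat)%:Z)) /=.
by rewrite addrA opprD addrA lerBrDl.
Qed.
End LatticeSum.

Lemma lattice_sum_poly_nonneg n (w : 'I_n -> int) (Phi : int -> int -> CC) :
  (forall i, 0 <= w i) -> poly2_on (quadrant (-1) 0) Phi ->
  poly2_on (quadrant (-1) 0) (lattice_sum w Phi).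
Proof.
move=> + HPhi; elim: n w => [|n IH] w w0 /=.
  by apply: poly2_on_eq HPhi => A B [_ ->].
apply: poly2_on_sub (poly2_on_sum_diag (w0 ord0) (IH _ (fun i => w0 _))).
by move=> A B [A1 B0]; split; lia.
Qed.

Lemma lattice_sum_poly n (w : 'I_n.+1 -> int) (Phi : int -> int -> CC) :
  (forall i, 0 <= w i) -> poly2_on (quadrant (-1) 0) Phi ->
  poly2_on (quadrant (-1) (-1)) (lattice_sum w Phi).
Proof.
by move=> w0 HPhi; apply: poly2_on_sum_diag (w0 ord0) (lattice_sum_poly_nonneg _ HPhi).
Qed.

Definition simplex_count (s : nat) (A : int) : CC :=
  lattice_sum (fun _ : 'I_s => 0) (fun _ _ => 1) 0 A.

Definition cone_count (s r : nat) (a : 'I_r -> nat) (A B : int) : CC :=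
  lattice_sum (fun j => (a j)%:Z) (fun A' _ => simplex_count s A') A B.

Lemma simplex_count_poly s : (0 < s)%N ->
  poly2_on (quadrant (-1) 0) (fun A _ => simplex_count s A).
Proof.
case: s => // s _; have [P HP] := lattice_sum_poly (fun _ : 'I_s.+1 => lexx 0)
  (poly2_on_cst (quadrant (-1) 0) 1).
apply: poly2_on_eq (poly2_on_comp P (poly2_on_cst _ 0) (poly2_on_x _)) => A B [A1 _].
by rewrite /simplex_count HP.
Qed.

Lemma cone_count_poly s r (a : 'I_r -> nat) : (0 < s)%N -> (0 < r)%N ->
  poly2_on (quadrant (-1) (-1)) (cone_count s a).
Proof.
case: r a => // r a s0 _.
exact: lattice_sum_poly (fun j => le0z_nat _) (simplex_count_poly s0).
Qed.

Lemma ler_sum_term (R : numDomainType) (I : finType) (F : I -> R) i :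
  (forall j, 0 <= F j) -> F i <= \sum_j F j.
Proof. by move=> F0; rewrite (bigD1 i) //= lerDl sumr_ge0. Qed.

Lemma ler_sum_weighted (R : numDomainType) (I : finType) (w f : I -> R) b :
  (forall i, 0 <= w i) -> (forall i, f i <= b) -> \sum_i w i * f i <= (\sum_i w i) * b.
Proof. by move=> w0 fb; rewrite mulr_suml; apply: ler_sum => i _; rewrite ler_wpM2l. Qed.

Section Boxes.
Variables s r : nat.
Implicit Types (c m : charM s r) (N : nat).
Local Notation box N := ({ffun 'I_s -> 'I_N} * {ffun 'I_r -> 'I_N})%type.

Definition box_pt c N (z : box N) : charM s r :=
  ([ffun i => c.1 i + (z.1 i : nat)%:Z], [ffun j => c.2 j + (z.2 j : nat)%:Z]).

Definition in_box c N m : bool :=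
  [forall i, c.1 i <= m.1 i < c.1 i + N%:Z] && [forall j, c.2 j <= m.2 j < c.2 j + N%:Z].

Lemma box_pt_inj c N : injective (box_pt c (N := N)).
Proof.
move=> [g h] [g' h'] [/ffunP E1 /ffunP E2]; congr (_, _); apply/ffunP => i.
  by apply: val_inj; have := E1 i; rewrite !ffunE => /addrI [].
by apply: val_inj; have := E2 i; rewrite !ffunE => /addrI [].
Qed.

Lemma in_boxP c N m : in_box c N m ->
  exists z : box N, box_pt c z = m.
Proof.
case/andP=> /forallP H1 /forallP H2.
have lt1 i : (Num.truncn (m.1 i - c.1 i) < N)%N.
  by case/andP: (H1 i) => ? ?; rewrite -ltz_nat truncnZ; lia.
have lt2 j : (Num.truncn (m.2 j - c.2 j) < N)%N.
  by case/andP: (H2 j) => ? ?; rewrite -ltz_nat truncnZ; lia.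
exists ([ffun i => Ordinal (lt1 i)], [ffun j => Ordinal (lt2 j)]).
rewrite [RHS]surjective_pairing; congr (_, _); apply/ffunP => i; rewrite !ffunE /=.
  by case/andP: (H1 i) => ? ?; rewrite truncnZ; lia.
by case/andP: (H2 i) => ? ?; rewrite truncnZ; lia.
Qed.

Lemma fsbig_box (R : Type) (idx : R) (op : Monoid.com_law idx) c N (F : charM s r -> R) :
  (forall m, ~~ in_box c N m -> F m = idx) ->
  \big[op/idx]_(m \in [set: charM s r]) F m = \big[op/idx]_(z : box N) F (box_pt c z).
Proof.
move=> F0; pose pts := [seq box_pt c z | z : box N].
have uniq_pts : uniq pts by rewrite map_inj_uniq ?enum_uniq //; apply: box_pt_inj.
rewrite -(fsbig_widen [set` pts] [set: charM s r]) //; last first.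
  move=> m [_ /= m_pts]; apply: F0; apply: contra_notN m_pts => /in_boxP[z <-].
  by apply: map_f; rewrite mem_enum.
by rewrite -fsbig_seq // big_map big_enum.
Qed.
End Boxes.

Section Feasible.
Variables (s r : nat) (a : 'I_r -> nat).
Local Notation box N := ({ffun 'I_s -> 'I_N} * {ffun 'I_r -> 'I_N})%type.

(* [inl t] is the ray rho_t and [inr u] the ray eta_u. *)
Definition ray := ('I_s.+1 + 'I_r.+1)%type.

Definition ray_val (p q : int) (m : charM s r) (tau : ray) : int :=
  match tau with
  | inl t => if unlift ord0 t is Some i then m.1 i else pair_rho0 a m + p
  | inr u => if unlift ord0 u is Some j then m.2 j else pair_eta0 m + q
  end.

Definition feasible (th : ray -> int) (p q : int) (m : charM s r) : bool :=
  [forall tau, th tau <= ray_val p q m tau].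

Definition corner (th : ray -> int) : charM s r :=
  ([ffun i => th (inl (lift ord0 i))], [ffun j => th (inr (lift ord0 j))]).

Definition coneA (th : ray -> int) (p : int) : int :=
  p - \sum_(t < s.+1) th (inl t) + \sum_(j < r) (a j)%:Z * th (inr (lift ord0 j)).

Definition coneB (th : ray -> int) (q : int) : int := q - \sum_(u < r.+1) th (inr u).

Lemma forall_ray (P : pred ray) : [forall tau, P tau] =
  [&& P (inl ord0), [forall i, P (inl (lift ord0 i))],
      P (inr ord0) & [forall j, P (inr (lift ord0 j))]].
Proof.
apply/forallP/and4P => [H|[H0 /forallP H1 H2 /forallP H3]].
  by split=> //; apply/forallP.
by case=> t; case: (unliftP ord0 t) => [i ->|->].
Qed.

Lemma feasibleE th p q m : feasible th p q m =
  [&& \sum_i (m.1 i - th (inl (lift ord0 i)))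
        <= coneA th p + \sum_j (a j)%:Z * (m.2 j - th (inr (lift ord0 j))),
      [forall i, th (inl (lift ord0 i)) <= m.1 i],
      \sum_j (m.2 j - th (inr (lift ord0 j))) <= coneB th q &
      [forall j, th (inr (lift ord0 j)) <= m.2 j]].
Proof.
rewrite /feasible forall_ray /= !unlift_none.
under eq_forallb do rewrite liftK.
under [X in [&& _, _, _ & X]]eq_forallb do rewrite liftK.
congr [&& _, _, _ & _].
  rewrite /coneA /pair_rho0 big_ord_recl !sumrB.
  under [X in _ = (_ <= _ + X)]eq_bigr do rewrite mulrBr.
  rewrite sumrB.
  set S1 := \sum_(i < s) m.1 i; set S2 := \sum_(i < s) th (inl (lift ord0 i)).
  set S3 := \sum_(j < r) (a j)%:Z * m.2 j.
  set S4 := \sum_(j < r) (a j)%:Z * th (inr (lift ord0 j)).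
  by apply/idP/idP; lia.
rewrite /coneB /pair_eta0 big_ord_recl sumrB.
set S1 := \sum_(j < r) m.2 j; set S2 := \sum_(j < r) th (inr (lift ord0 j)).
by apply/idP/idP; lia.
Qed.

Lemma feasible_box_pt th p q N (z : box N) :
  feasible th p q (box_pt (corner th) z) =
  (\sum_j (z.2 j : nat)%:Z <= coneB th q) &&
  (\sum_i (z.1 i : nat)%:Z <= coneA th p + \sum_j (a j)%:Z * (z.2 j : nat)%:Z).
Proof.
rewrite feasibleE /box_pt /corner /=.
under eq_bigr do rewrite !ffunE addrC addKr.
under [X in _ <= _ + X]eq_bigr do rewrite !ffunE addrC addKr.
under [X in [&& _, _, X <= _ & _]]eq_bigr do rewrite !ffunE addrC addKr.
rewrite [X in [&& _, X, _ & _]](_ : _ = true); last first.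
  by apply/forallP => i; rewrite !ffunE lerDl.
rewrite [X in [&& _, _, _ & X]](_ : _ = true); last first.
  by apply/forallP => j; rewrite !ffunE lerDl.
by rewrite andbT andbC.
Qed.

Lemma feasible_in_box th p q N m :
  coneB th q < N%:Z -> coneA th p + (\sum_j (a j)%:Z) * coneB th q < N%:Z ->
  feasible th p q m -> in_box (corner th) N m.
Proof.
rewrite feasibleE => BN AN /and4P[hx /forallP x0 hy /forallP y0].
have x_ge0 i : 0 <= m.1 i - th (inl (lift ord0 i)) by rewrite subr_ge0.
have y_ge0 j : 0 <= m.2 j - th (inr (lift ord0 j)) by rewrite subr_ge0.
have y_le j := le_trans (ler_sum_term j y_ge0) hy.
have {}hx : \sum_i (m.1 i - th (inl (lift ord0 i)))
    <= coneA th p + (\sum_j (a j)%:Z) * coneB th q.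
  by apply: le_trans hx _; rewrite lerD2l ler_sum_weighted.
move: AN BN hx; set K := coneA th p + _; set B := coneB th q => AN BN hx.
apply/andP; split; apply/forallP => i; rewrite !ffunE /=.
  by have := le_trans (ler_sum_term i x_ge0) hx; have := x0 i; lia.
by have := y_le i; have := y0 i; lia.
Qed.

Lemma feasible_boxed th p q :
  exists N, forall m, ~~ in_box (corner th) N m -> ~~ feasible th p q m.
Proof.
set A := coneA th p; set B := coneB th q; set al := \sum_j (a j)%:Z.
exists (absz B + absz (A + al * B)).+1 => m; apply: contra.
by apply: feasible_in_box; lia.
Qed.

Lemma feasible_count th p q :
  \sum_(m \in [set: charM s r]) ((feasible th p q m)%:R : CC)
  = cone_count s a (coneA th p) (coneB th q).
Proof.
set A := coneA th p; set B := coneB th q; set al := \sum_j (a j)%:Z.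
pose N := (absz B + absz (A + al * B)).+1.
have BN : B < N%:Z by rewrite /N; lia.
have AN : A + al * B < N%:Z by rewrite /N; lia.
rewrite (fsbig_box _ (c := corner th) (N := N)) => [|m]; last first.
  by case: (boolP (feasible th p q m)) => // /(feasible_in_box BN AN) ->.
under eq_bigr do rewrite feasible_box_pt.
rewrite -(pair_big xpredT xpredT (fun (x : {ffun 'I_s -> 'I_N}) (y : {ffun 'I_r -> 'I_N}) =>
  ((\sum_j (y j : nat)%:Z <= B) &&
  (\sum_i (x i : nat)%:Z <= A + \sum_j (a j)%:Z * (y j : nat)%:Z))%:R)) /=.
rewrite exchange_big /cone_count -(lattice_sum_box _ _ _ BN) [RHS]big_mkcond /=.
apply: eq_bigr => y _; case: ifP => yB; last by rewrite big1.
have ayN : A + \sum_j (a j)%:Z * (y j : nat)%:Z < N%:Z.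
  apply: le_lt_trans AN; rewrite lerD2l ler_sum_weighted // => j.
  exact: le_trans (ler_sum_term j (fun j => le0z_nat _)) yB.
rewrite /simplex_count -(lattice_sum_box _ _ _ ayN) [RHS]big_mkcond /=.
by apply: eq_bigr => x _; case: ifP.
Qed.

Lemma fsbig_exchange_feasible th p q (R : nmodType) (I : finType)
    (F : I -> charM s r -> R) :
  (forall i m, ~~ feasible th p q m -> F i m = 0) ->
  \sum_(m \in [set: charM s r]) \sum_i F i m = \sum_i \sum_(m \in [set: charM s r]) F i m.
Proof.
have [N HN] := feasible_boxed th p q => F0.
rewrite (fsbig_box _ (c := corner th) (N := N)) => [|m /HN nf]; last first.
  by rewrite big1 // => i _; apply: F0.
rewrite exchange_big; apply: eq_bigr => i _.
by rewrite (fsbig_box _ (c := corner th) (N := N)) // => m /HN; apply: F0.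
Qed.

Lemma fsbig_natr_feasible th p q (F : charM s r -> nat) :
  (forall m, ~~ feasible th p q m -> F m = 0%N) ->
  (\big[addn/0%N]_(m \in [set: charM s r]) F m)%:R
  = \sum_(m \in [set: charM s r]) ((F m)%:R : CC).
Proof.
have [N HN] := feasible_boxed th p q => F0.
rewrite (fsbig_box _ (c := corner th) (N := N)) => [|m /HN]; last exact: F0.
rewrite natr_sum (fsbig_box _ (c := corner th) (N := N)) // => m /HN nf.
by rewrite F0.
Qed.
End Feasible.

Definition level (l : nat) (ii : nat -> int) (v : int) : nat :=
  (\sum_(1 <= n < l.+1) (ii n <= v)%R)%N.

Definition filt_space (l : nat) (FF : nat -> 'M[CC]_l) (k : nat) : 'M[CC]_l :=
  (\sum_(1 <= n < k.+1) FF n)%MS.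

Section Level.
Variables (l : nat) (ii : nat -> int).
Hypothesis ii_mono : forall n, (1 <= n < l)%N -> ii n <= ii n.+1.

Lemma ii_le n k : (1 <= n)%N -> (n <= k <= l)%N -> ii n <= ii k.
Proof.
move=> n1 /andP[]; elim: k => [|k IH]; first by rewrite leqn0 => /eqP ->.
rewrite leq_eqVlt => /orP[/eqP -> //|nk] kl.
by apply: le_trans (IH nk (ltnW kl)) (ii_mono _); rewrite kl (leq_trans n1 nk).
Qed.

Lemma level_le v : (level l ii v <= l)%N.
Proof.
rewrite /level; apply: (@leq_trans (\sum_(1 <= n < l.+1) 1)%N).
  by apply: leq_sum => n _; apply: leq_b1.
by rewrite sum_nat_const_nat muln1 subn1.
Qed.

Lemma leq_level v k : (1 <= k <= l)%N -> (k <= level l ii v)%N = (ii k <= v).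
Proof.
case/andP=> k1 kl; have [ikv|vik] := lerP (ii k) v.
  rewrite /level (big_cat_nat (n := k.+1)) /=; [|lia|lia].
  apply: leq_trans (leq_addr _ _); rewrite (eq_big_nat _ _ (F2 := fun=> 1%N)).
    by rewrite sum_nat_const_nat muln1 subn1.
  by move=> n /andP[n1 nk]; rewrite (le_trans (ii_le n1 _) ikv) //; lia.
apply/negbTE; rewrite -ltnNge /level (big_cat_nat (n := k)) /=; [|lia|lia].
rewrite [X in (_ + X)%N]big_nat_cond [X in (_ + X)%N]big1 ?addn0; last first.
  move=> n /andP[/andP[kn nl] _].
  by apply/eqP; rewrite eqb0 -ltNge (lt_le_trans vik) // ii_le //; lia.
apply: (@leq_ltn_trans (\sum_(1 <= n < k) 1)%N).
  by apply: leq_sum => n _; apply: leq_b1.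
by rewrite sum_nat_const_nat muln1; lia.
Qed.

Lemma filt_level (FF : nat -> 'M[CC]_l) v :
  filt ii FF v = filt_space FF (level l ii v).
Proof.
rewrite /filt /filt_space (big_nat_widen _ _ _ _ _ (_ : (level l ii v).+1 <= l.+1)%N);
  last by rewrite ltnS level_le.
by apply: congr_big_nat => // n nl; rewrite -(leq_level v nl).
Qed.
End Level.

Section Indicators.
Variables (R : comPzRingType) (I : finType).

Lemma prod_natr_bool (b : I -> bool) : \prod_i (b i)%:R = [forall i, b i]%:R :> R.
Proof.
have [/forallP bT|/forallPn[i /negbTE bi]] := boolP [forall i, b i].
  by rewrite big1 // => i _; rewrite bT.
by rewrite (bigD1 i) //= bi mul0r.
Qed.

Lemma prod_if_opp (J : {set I}) (x y : I -> R) :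
  \prod_i (if i \in J then - x i else y i)
  = (-1) ^+ #|J| * \prod_i (if i \in J then x i else y i).
Proof.
rewrite (bigID (fun i => i \in J)) [X in _ * X](bigID (fun i => i \in J)) /= mulrA.
congr (_ * _); last by apply: eq_bigr => i /negbTE ->.
rewrite (eq_bigr (fun i => - x i)) => [|i ->] //; rewrite prodrN.
by congr (_ * _); apply: eq_bigr => i ->.
Qed.

Lemma natr_eqnE (m n : nat) : (m == n)%:R = (n <= m)%:R - (n < m)%:R :> R.
Proof. by case: ltngtP => _; rewrite ?subrr ?subr0. Qed.

Lemma natr_forall_eqnE (f g : I -> nat) :
  [forall i, f i == g i]%:R
  = \sum_(J : {set I}) (-1) ^+ #|J| * [forall i, g i + (i \in J) <= f i]%N%:R :> R.
Proof.
rewrite -prod_natr_bool (eq_bigr _ (fun i _ => natr_eqnE _ _)).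
rewrite (eq_bigr (fun i => - (g i < f i)%N%:R + (g i <= f i)%N%:R)) => [|i _]; last first.
  by rewrite addrC.
rewrite bigA_distr; apply: eq_bigr => J _; rewrite prod_if_opp -prod_natr_bool.
by congr (_ * _); apply: eq_bigr => i _; case: (i \in J); rewrite ?addn1 ?addn0.
Qed.

End Indicators.

Section Filtrations.
Variables (s r l : nat) (a : 'I_r -> nat).
Variables (iR : 'I_s.+1 -> nat -> int) (FR : 'I_s.+1 -> nat -> 'M[CC]_l).
Variables (jE : 'I_r.+1 -> nat -> int) (GE : 'I_r.+1 -> nat -> 'M[CC]_l).
Hypothesis iR_mono : forall t n, (1 <= n < l)%N -> iR t n <= iR t n.+1.
Hypothesis jE_mono : forall u n, (1 <= n < l)%N -> jE u n <= jE u n.+1.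
Hypothesis l_gt0 : (0 < l)%N.

Local Notation ray := (ray s r).

Definition ray_thr (tau : ray) : nat -> int :=
  match tau with inl t => iR t | inr u => jE u end.

Definition ray_space (tau : ray) : nat -> 'M[CC]_l :=
  match tau with inl t => FR t | inr u => GE u end.

Lemma ray_thr_mono tau n : (1 <= n < l)%N -> ray_thr tau n <= ray_thr tau n.+1.
Proof. by case: tau => [t|u]; [apply: iR_mono | apply: jE_mono]. Qed.

Definition ray_level (p q : int) (m : charM s r) (tau : ray) : nat :=
  level l (ray_thr tau) (ray_val a p q m tau).

Definition weight_space (lam : ray -> nat) : 'M[CC]_l :=
  (filt_space (FR ord0) (lam (inl ord0))
   :&: (\bigcap_(i < s) filt_space (FR (lift ord0 i)) (lam (inl (lift ord0 i))))
   :&: filt_space (GE ord0) (lam (inr ord0))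
   :&: (\bigcap_(j < r) filt_space (GE (lift ord0 j)) (lam (inr (lift ord0 j)))))%MS.

Lemma H0_weight_level p q m :
  H0_weight a iR FR jE GE p q m = weight_space (ray_level p q m).
Proof.
rewrite /H0_weight /weight_space /ray_level /ray_val /= !unlift_none.
congr (_ :&: _ :&: _ :&: _)%MS; rewrite ?(filt_level (iR_mono _)) ?(filt_level (jE_mono _)) //.
  by apply: eq_bigr => i _; rewrite liftK (filt_level (iR_mono _)).
by apply: eq_bigr => j _; rewrite liftK (filt_level (jE_mono _)).
Qed.

Lemma weight_space_sub lam tau :
  (weight_space lam <= filt_space (ray_space tau) (lam tau))%MS.
Proof.
rewrite /weight_space; case: tau => [t|t] /=; case: (unliftP ord0 t) => [i ->|->].
- apply: submx_trans (capmxSl _ _) _; apply: submx_trans (capmxSl _ _) _.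
  by apply: submx_trans (capmxSr _ _) _; apply: bigcapmx_inf.
- by do 3 apply: submx_trans (capmxSl _ _) _.
- by apply: submx_trans (capmxSr _ _) _; apply: bigcapmx_inf.
- by apply: submx_trans (capmxSl _ _) _; apply: capmxSr.
Qed.

Lemma rank_weight_space0 lam tau : lam tau = 0%N -> \rank (weight_space lam) = 0%N.
Proof.
move=> lam0; apply/eqP; rewrite mxrank_eq0 -submx0.
by apply: submx_trans (weight_space_sub lam tau) _; rewrite lam0 /filt_space big_geq.
Qed.

Definition thresholds (c : ray -> nat) (tau : ray) : int := ray_thr tau (c tau).
Local Notation th1 := (thresholds (fun=> 1%N)).

Lemma above_levelsE c p q m : (forall tau, 1 <= c tau <= l)%N ->
  [forall tau, c tau <= ray_level p q m tau]%N = feasible a (thresholds c) p q m.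
Proof. by move=> c1; apply: eq_forallb => tau; rewrite leq_level //; apply: ray_thr_mono. Qed.

Lemma above_levels_gt c p q m tau : (l < c tau)%N ->
  [forall tau, c tau <= ray_level p q m tau]%N = false.
Proof.
move=> lc; apply/negbTE/forallPn; exists tau; rewrite -ltnNge.
exact: leq_ltn_trans (level_le _ _ _) lc.
Qed.

Lemma feasible_levels_gt0 p q m :
  feasible a th1 p q m = [forall tau, 0 < ray_level p q m tau]%N.
Proof. by rewrite -above_levelsE. Qed.

Definition level_count (lam : ray -> nat) (p q : int) : CC :=
  \sum_(m \in [set: charM s r]) ([forall tau, ray_level p q m tau == lam tau]%:R : CC).

Definition above_count (c : ray -> nat) (p q : int) : CC :=
  \sum_(m \in [set: charM s r]) ([forall tau, c tau <= ray_level p q m tau]%N%:R : CC).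

Lemma rank_H0_weightE p q m :
  (\rank (H0_weight a iR FR jE GE p q m))%:R
  = \sum_(lam : {ffun ray -> 'I_l.+1}) (\rank (weight_space (fun tau => lam tau)))%:R
      * [forall tau, ray_level p q m tau == lam tau]%:R :> CC.
Proof.
pose lam0 : {ffun ray -> 'I_l.+1} := [ffun tau => inord (ray_level p q m tau)].
have lam0E tau : (lam0 tau : nat) = ray_level p q m tau.
  by rewrite ffunE inordK // ltnS level_le.
rewrite (bigD1 lam0) //= big1 ?addr0 => [|lam lam_ne].
  have -> : [forall tau, ray_level p q m tau == lam0 tau].
    by apply/forallP => tau; rewrite lam0E.
  rewrite mulr1 H0_weight_level; congr (\rank (weight_space _))%:R.
  by apply/funext => tau; rewrite lam0E.
suff -> : [forall tau, ray_level p q m tau == lam tau] = false by rewrite mulr0.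
apply: contraNF lam_ne => /forallP lamE; apply/eqP/ffunP => tau.
by apply: ord_inj; rewrite lam0E (eqP (lamE tau)).
Qed.

Lemma hGamma_level_counts p q :
  (hGamma a iR FR jE GE p q)%:R
  = \sum_(lam : {ffun ray -> 'I_l.+1}) (\rank (weight_space (fun tau => lam tau)))%:R
      * level_count (fun tau => lam tau) p q.
Proof.
have level0 m : ~~ feasible a th1 p q m ->
    exists tau, ray_level p q m tau = 0%N.
  by rewrite feasible_levels_gt0 => /forallPn[tau]; rewrite lt0n negbK => /eqP; exists tau.
rewrite /hGamma (fsbig_natr_feasible (a := a) (th := th1) (p := p) (q := q));
  last by move=> m /level0[tau]; rewrite H0_weight_level; apply: rank_weight_space0.
under eq_fsbigr do rewrite rank_H0_weightE.
rewrite (fsbig_exchange_feasible (a := a) (th := th1) (p := p) (q := q)).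
  by apply: eq_bigr => lam _; rewrite mulr_fsumr.
move=> lam m /level0[tau lev0].
have [/forallP eq_lam|_] := boolP [forall tau, ray_level p q m tau == lam tau];
  last by rewrite mulr0.
by rewrite (rank_weight_space0 (tau := tau)) ?mul0r // -(eqP (eq_lam tau)).
Qed.

Lemma level_count_incl_excl lam p q : (forall tau, 0 < lam tau)%N ->
  level_count lam p q = \sum_(J : {set ray})
    (-1) ^+ #|J| * above_count (fun tau => lam tau + (tau \in J))%N p q.
Proof.
move=> lam_gt0; rewrite /level_count; under eq_fsbigr do rewrite natr_forall_eqnE.
rewrite (fsbig_exchange_feasible (a := a) (th := th1) (p := p) (q := q)).
  by apply: eq_bigr => J _; rewrite mulr_fsumr.
move=> J m; rewrite feasible_levels_gt0 => /forallPn[tau]; rewrite -leqNgt leqn0 => /eqP lev0.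
rewrite (_ : [forall _, _] = false) ?mulr0 //; apply/negbTE/forallPn; exists tau.
by rewrite lev0 -ltnNge ltn_addr.
Qed.

Lemma above_count_cone c p q : (forall tau, 1 <= c tau <= l)%N ->
  above_count c p q = cone_count s a (coneA a (thresholds c) p) (coneB (thresholds c) q).
Proof. by move=> c1; rewrite -feasible_count; apply: eq_fsbigr => m _; rewrite above_levelsE. Qed.

Lemma above_count_gt c p q tau : (l < c tau)%N -> above_count c p q = 0.
Proof. by move=> lc; apply: fsbig1 => m _; rewrite (above_levels_gt _ _ _ lc). Qed.

Definition hGamma_region (p q : int) : Prop :=
  \sum_(t < s.+1) iR t l - \sum_(j < r) (a j)%:Z * jE (lift ord0 j) 1%N - 1 <= p /\
  \sum_(u < r.+1) jE u l - 1 <= q.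

Lemma cone_quadrant c p q : (forall tau, 1 <= c tau <= l)%N -> hGamma_region p q ->
  quadrant (-1) (-1) (coneA a (thresholds c) p) (coneB (thresholds c) q).
Proof.
move=> c1 [hp hq]; have th_le tau : thresholds c tau <= ray_thr tau l.
  case/andP: (c1 tau) => c_gt0 c_le.
  by apply: (ii_le (ray_thr_mono tau) c_gt0); rewrite c_le leqnn.
have th_ge tau : ray_thr tau 1 <= thresholds c tau.
  by apply: (ii_le (ray_thr_mono tau) (leqnn 1)); rewrite c1.
have hR : \sum_(t < s.+1) thresholds c (inl t) <= \sum_(t < s.+1) iR t l.
  by apply: ler_sum => t _; apply: th_le (inl t).
have hE : \sum_(u < r.+1) thresholds c (inr u) <= \sum_(u < r.+1) jE u l.
  by apply: ler_sum => u _; apply: th_le (inr u).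
have ha : \sum_(j < r) (a j)%:Z * jE (lift ord0 j) 1%N
    <= \sum_(j < r) (a j)%:Z * thresholds c (inr (lift ord0 j)).
  by apply: ler_sum => j _; rewrite ler_wpM2l //; apply: th_ge (inr _).
by rewrite /coneA /coneB; split; lia.
Qed.

Hypotheses (s_gt0 : (0 < s)%N) (r_gt0 : (0 < r)%N).

Lemma above_count_poly c : (forall tau, 0 < c tau)%N -> poly2_on hGamma_region (above_count c).
Proof.
move=> c_gt0; have [/forallP c_le|] := boolP [forall tau, c tau <= l]%N; last first.
  case/forallPn => tau; rewrite -ltnNge => lc.
  by apply: poly2_on_eq (poly2_on_cst _ 0) => p q _; apply: above_count_gt lc.
have c1 tau : (1 <= c tau <= l)%N by rewrite c_gt0 c_le.
set th := thresholds c.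
have shiftA p : coneA a th p = p + coneA a th 0 by rewrite /coneA; lia.
have shiftB q : coneB th q = q + coneB th 0 by rewrite /coneB; lia.
have shifted := poly2_on_shift (coneA a th 0) (coneB th 0) (cone_count_poly a s_gt0 r_gt0).
apply: poly2_on_eq (poly2_on_sub _ shifted) => [p q _|p q /(cone_quadrant c1)].
  by rewrite above_count_cone // (shiftA p) (shiftB q).
by rewrite (shiftA p) (shiftB q).
Qed.

Lemma level_count_poly lam : (forall tau, 0 < lam tau)%N ->
  poly2_on hGamma_region (level_count lam).
Proof.
move=> lam_gt0; apply: poly2_on_eq (poly2_on_sum (index_enum _) _) => [p q _|J].
  by rewrite level_count_incl_excl.
apply: poly2_onM (poly2_on_cst _ _) (above_count_poly _) => tau.
by rewrite addn_gt0 lam_gt0.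
Qed.

Lemma hGamma_poly : poly2_on hGamma_region (fun p q => (hGamma a iR FR jE GE p q)%:R).
Proof.
apply: poly2_on_eq (poly2_on_sum (index_enum {ffun ray -> 'I_l.+1}) _) => [p q _|lam].
  by rewrite hGamma_level_counts.
have [/forallP lam_gt0|/forallPn[tau]] := boolP [forall tau, 0 < lam tau]%N.
  exact: poly2_onM (poly2_on_cst _ _) (level_count_poly lam_gt0).
rewrite lt0n negbK => /eqP lam0; apply: poly2_on_eq (poly2_on_cst _ 0) => p q _.
by rewrite (rank_weight_space0 (tau := tau)) // mul0r.
Qed.
End Filtrations.

Unset Implicit Arguments.
Set Strict Implicit.

Theorem mainTheorem12 (s r l : nat) (a : 'I_r -> nat)
  (iR : 'I_s.+1 -> nat -> int) (FR : 'I_s.+1 -> nat -> 'M[CC]_l)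
  (jE : 'I_r.+1 -> nat -> int) (GE : 'I_r.+1 -> nat -> 'M[CC]_l) :
  (1 <= s)%N -> (1 <= r)%N -> (1 <= l)%N ->
  (forall j k : 'I_r, (j <= k)%N -> (a j <= a k)%N) ->
  (forall t, filt_data (iR t) (FR t)) ->
  (forall u, filt_data (jE u) (GE u)) ->
  exists P : {poly {poly CC}},
    forall p q : int,
      p >= \sum_(t < s.+1) iR t l
           - \sum_(j < r) (a j)%:Z * jE (lift ord0 j) 1%N - 1 ->
      q >= \sum_(u < r.+1) jE u l - 1 ->
      (hGamma a iR FR jE GE p q)%:R = eval2 P p%:~R q%:~R.
Proof.
move=> s_gt0 r_gt0 l_gt0 _ filt_R filt_E.
have iR_mono t n : (1 <= n < l)%N -> iR t n <= iR t n.+1.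
  by case: (filt_R t) => + _ _ _ _; apply.
have jE_mono u n : (1 <= n < l)%N -> jE u n <= jE u n.+1.
  by case: (filt_E u) => + _ _ _ _; apply.
have [P HP] := hGamma_poly a FR GE iR_mono jE_mono l_gt0 s_gt0 r_gt0.
by exists P => p q hp hq; apply: HP.
Qed.
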